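(* Let $\mathcal{X}^c=(X^c,\tau^c,\Phi^c,V^c)$ be the canonical model for $APAL_{int}$. Then for every $\varphi\in\mathcal{L}_{APAL_{int}}$ and every $x\in X^c$: $\varphi\in x$ iff $\mathcal{X}^c,(x,\theta^* )\models\varphi$.
   Context: Fix a countable set $\mathit{Prop}$ and a finite non-empty set $\mathcal{A}$ of agents. $\mathcal{L}_{APAL_{int}}$: $\varphi ::= p \mid \neg\varphi \mid \varphi\wedge\varphi \mid K_i\varphi \mid \mathrm{int}(\varphi)\mid [\varphi]\varphi\mid\Box\varphi$; $\mathcal{L}_{PAL_{int}}$ its $\Box$-free fragment; $\bot:=p\wedge\neg p$. Necessity forms: $\xi(\sharp)::=\sharp\mid\varphi\to\xi(\sharp)\mid K_i\xi(\sharp)\mid\mathrm{int}(\xi(\sharp))\mid[\varphi]\xi(\sharp)$. $APAL_{int}$: axioms: propositional tautologies; $K_i(\varphi\to\psi)\to(K_i\varphi\to K_i\psi)$; $K_i\varphi\to\varphi$; $K_i\varphi\to K_iK_i\varphi$; $\neg K_i\varphi\to K_i\neg K_i\varphi$; $\mathrm{int}(\varphi\to\psi)\to(\mathrm{int}(\varphi)\to\mathrm{int}(\psi))$; $\mathrm{int}(\varphi)\to\varphi$; $\mathrm{int}(\varphi)\to\mathrm{int}(\mathrm{int}(\varphi))$; $K_i\varphi\to\mathrm{int}(\varphi)$; $[\varphi]p\leftrightarrow(\mathrm{int}(\varphi)\to p)$; $[\varphi]\neg\psi\leftrightarrow(\mathrm{int}(\varphi)\to\neg[\varphi]\psi)$;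 $[\varphi](\psi\wedge\chi)\leftrightarrow[\varphi]\psi\wedge[\varphi]\chi$; $[\varphi]\mathrm{int}(\psi)\leftrightarrow(\mathrm{int}(\varphi)\to\mathrm{int}([\varphi]\psi))$; $[\varphi]K_i\psi\leftrightarrow(\mathrm{int}(\varphi)\to K_i[\varphi]\psi)$; $[\varphi][\psi]\chi\leftrightarrow[\neg[\varphi]\neg\mathrm{int}(\psi)]\chi$; $\Box\varphi\to[\chi]\varphi$ for $\chi\in\mathcal{L}_{PAL_{int}}$. Rules: modus ponens; from $\varphi$ infer $K_i\varphi$; from $\varphi$ infer $\mathrm{int}(\varphi)$; from $\varphi$ infer $[\psi]\varphi$; (DR5) from $\xi([\psi]\chi)$ for all $\psi\in\mathcal{L}_{PAL_{int}}$ infer $\xi(\Box\chi)$. A theory is a set $x$ of formulas containing all theorems of $APAL_{int}$ and closed under modus ponens and (DR5); it is consistent iff $\bot\notin x$; a set of formulas is consistent iff it is contained in a consistent theory; a theory is maximally consistent iff it is consistent and every set properly containing it is inconsistent. Canonical model: $X^c$ is the set of maximally consistent theories; $x\sim_i y$ iff for all $\varphi$, $K_i\varphi\in x\Leftrightarrow K_i\varphi\in y$; $[x]_i$ the $\sim_i$-class of $x$; $\widehat{\varphi}=\{y\in X^c\mid\varphi\in y\}$; $\tau^c$ is generated by the subbase $\{[x]_i\cap\widehat{\mathrm{int}(\varphi)}\mid x\in X^c,\varphi\in\mathcal{L}_{APAL_{int}},i\in\mathcal{A}\}$; $x\in V^c(p)$ iff $p\in x$; $\theta^*(x)(i)=[x]_i$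 (total), $\Phi^c=\{\theta^*|_U\mid U\in\tau^c\}$ with $\theta^*|_U$ of domain $U$ and values $[x]_i\cap U$. Semantics at $(x,\theta)$, $x\in Dom(\theta)$: $p$ iff $x\in V^c(p)$; Booleans usual; $K_i\varphi$ iff $\varphi$ holds at $(y,\theta)$ for all $y\in\theta(x)(i)$; $\mathrm{int}(\varphi)$ iff $x\in\mathrm{Int}([\![\varphi]\!]^\theta)$ with $[\![\varphi]\!]^\theta=\{y\in Dom(\theta)\mid(y,\theta)\models\varphi\}$; $[\varphi]\psi$ iff $(x,\theta)\models\mathrm{int}(\varphi)$ implies $(x,\theta^\varphi)\models\psi$, where $\theta^\varphi=\theta|_{\mathrm{Int}([\![\varphi]\!]^\theta)}$ (domain $Dom(\theta)\cap\mathrm{Int}([\![\varphi]\!]^\theta)$, values intersected with that set); $\Box\varphi$ iff $(x,\theta)\models[\psi]\varphi$ for all $\psi\in\mathcal{L}_{PAL_{int}}$. *)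

From Stdlib Require Import List FunctionalExtensionality.
Import ListNotations.
Set Implicit Arguments.

Section APALint.

Variable P : Type.
Variable Ag : Type.

Inductive form : Type :=
| Var  : P -> form
| Neg  : form -> form
| And  : form -> form -> form
| K    : Ag -> form -> form
| FInt : form -> form
| Ann  : form -> form -> form
| Box  : form -> form.

Definition Imp (a b : form) : form := Neg (And a (Neg b)).
Definition Iff (a b : form) : form := And (Imp a b) (Imp b a).
Definition Bot (p : P) : form := And (Var p) (Neg (Var p)).

Fixpoint isPAL (f : form) : Prop :=
  match f with
  | Var _ => True
  | Neg a => isPAL a
  | And a b => isPAL a /\ isPAL b
  | K _ a => isPAL a
  | FInt a => isPAL a
  | Ann a b => isPAL a /\ isPAL b
  | Box _ => False
  end.

Inductive nform : Type :=
| Hole : nform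
| NImp : form -> nform -> nform
| NK   : Ag -> nform -> nform
| NInt : nform -> nform
| NAnn : form -> nform -> nform.

Fixpoint fill (xi : nform) (c : form) : form :=
  match xi with
  | Hole => c
  | NImp a xi' => Imp a (fill xi' c)
  | NK i xi' => K i (fill xi' c)
  | NInt xi' => FInt (fill xi' c)
  | NAnn a xi' => Ann a (fill xi' c)
  end.

(** Propositional tautologies: valid under every Boolean valuation of the
    non-Boolean (atomic for propositional logic) subformulas. *)
Fixpoint beval (v : form -> bool) (f : form) : bool :=
  match f with
  | Neg a => negb (beval v a)
  | And a b => andb (beval v a) (beval v b)
  | _ => v f
  end.
Definition tautology (f : form) : Prop := forall v, beval v f = true.

Inductive Thm : form -> Prop :=
| Ax_taut : forall a, tautology a -> Thm a
| Ax_KK   : forall i a b, Thm (Imp (K i (Imp a b)) (Imp (K i a) (K i b)))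
| Ax_KT   : forall i a, Thm (Imp (K i a) a)
| Ax_K4   : forall i a, Thm (Imp (K i a) (K i (K i a)))
| Ax_K5   : forall i a, Thm (Imp (Neg (K i a)) (K i (Neg (K i a))))
| Ax_IntK : forall a b, Thm (Imp (FInt (Imp a b)) (Imp (FInt a) (FInt b)))
| Ax_IntT : forall a, Thm (Imp (FInt a) a)
| Ax_Int4 : forall a, Thm (Imp (FInt a) (FInt (FInt a)))
| Ax_KInt : forall i a, Thm (Imp (K i a) (FInt a))
| Ax_Rp   : forall a p, Thm (Iff (Ann a (Var p)) (Imp (FInt a) (Var p)))
| Ax_Rneg : forall a b, Thm (Iff (Ann a (Neg b)) (Imp (FInt a) (Neg (Ann a b))))
| Ax_Rand : forall a b c, Thm (Iff (Ann a (And b c)) (And (Ann a b) (Ann a c)))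
| Ax_Rint : forall a b, Thm (Iff (Ann a (FInt b)) (Imp (FInt a) (FInt (Ann a b))))
| Ax_RK   : forall a i b, Thm (Iff (Ann a (K i b)) (Imp (FInt a) (K i (Ann a b))))
| Ax_Rann : forall a b c,
    Thm (Iff (Ann a (Ann b c)) (Ann (Neg (Ann a (Neg (FInt b)))) c))
| Ax_Box  : forall a c, isPAL c -> Thm (Imp (Box a) (Ann c a))
| R_MP    : forall a b, Thm (Imp a b) -> Thm a -> Thm b
| R_NecK  : forall i a, Thm a -> Thm (K i a)
| R_NecInt: forall a, Thm a -> Thm (FInt a)
| R_NecAnn: forall b a, Thm a -> Thm (Ann b a)
| R_DR5   : forall xi c,
    (forall psi, isPAL psi -> Thm (fill xi (Ann psi c))) -> Thm (fill xi (Box c)).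

Definition fset := form -> Prop.

Definition isTheory (x : fset) : Prop :=
  (forall a, Thm a -> x a) /\
  (forall a b, x (Imp a b) -> x a -> x b) /\
  (forall xi c, (forall psi, isPAL psi -> x (fill xi (Ann psi c))) ->
                x (fill xi (Box c))).

Variable p0 : P.

Definition consistentTheory (x : fset) : Prop := isTheory x /\ ~ x (Bot p0).

Definition consistentSet (S : fset) : Prop :=
  exists x, consistentTheory x /\ (forall a, S a -> x a).

Definition maxConsistent (x : fset) : Prop :=
  consistentTheory x /\
  forall S : fset, (forall a, x a -> S a) -> (exists a, S a /\ ~ x a) ->
                   ~ consistentSet S.

Definition Xc : Type := { x : fset | maxConsistent x }.

Definition mem (x : Xc) (a : form) : Prop := proj1_sig x a.

Definition simc (i : Ag) (x y : Xc) : Prop :=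
  forall a, mem x (K i a) <-> mem y (K i a).

Definition cls (i : Ag) (x : Xc) : Xc -> Prop := fun y => simc i x y.

Definition subbase (s : Xc * form * Ag) : Xc -> Prop :=
  let '(x, a, i) := s in fun y => cls i x y /\ mem y (FInt a).

(** open sets of tau^c: the topology generated by the subbase
    (unions of finite intersections of subbase elements) *)
Definition isOpen (U : Xc -> Prop) : Prop :=
  forall y, U y -> exists l : list (Xc * form * Ag),
    (forall s, In s l -> subbase s y) /\
    (forall z, (forall s, In s l -> subbase s z) -> U z).

Definition interior (S : Xc -> Prop) : Xc -> Prop :=
  fun y => exists U, isOpen U /\ U y /\ (forall z, U z -> S z).

(** An element theta^*|_U of Phi^c (U open) is represented by its domain U:
    Dom = U, theta(x)(i) = [x]_i ∩ U.  Updating by phi gives the domain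
    U ∩ Int([[phi]]).  [sat a U x] means (x, theta^*|_U) |= a.
    [sat0] is the same clause-by-clause definition without the Box clause;
    it is only used on Box-free formulas (inside the Box clause, which
    quantifies over PAL_int formulas psi). *)
Fixpoint sat0 (f : form) : (Xc -> Prop) -> Xc -> Prop :=
  match f with
  | Var p => fun U x => mem x (Var p)
  | Neg a => fun U x => ~ sat0 a U x
  | And a b => fun U x => sat0 a U x /\ sat0 b U x
  | K i a => fun U x => forall y, cls i x y /\ U y -> sat0 a U y
  | FInt a => fun U x => interior (fun y => U y /\ sat0 a U y) x
  | Ann a b => fun U x =>
      interior (fun y => U y /\ sat0 a U y) x ->
      sat0 b (fun y => U y /\ interior (fun z => U z /\ sat0 a U z) y) x
  | Box _ => fun _ _ => False
  end.

Fixpoint sat (f : form) : (Xc -> Prop) -> Xc -> Prop :=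
  match f with
  | Var p => fun U x => mem x (Var p)
  | Neg a => fun U x => ~ sat a U x
  | And a b => fun U x => sat a U x /\ sat b U x
  | K i a => fun U x => forall y, cls i x y /\ U y -> sat a U y
  | FInt a => fun U x => interior (fun y => U y /\ sat a U y) x
  | Ann a b => fun U x =>
      interior (fun y => U y /\ sat a U y) x ->
      sat b (fun y => U y /\ interior (fun z => U z /\ sat a U z) y) x
  | Box a => fun U x =>
      forall psi, isPAL psi ->
      (interior (fun y => U y /\ sat0 psi U y) x ->
       sat a (fun y => U y /\ interior (fun z => U z /\ sat0 psi U z) y) x)
  end.

Lemma sat0_sat_PAL : forall f, isPAL f -> forall U, sat0 f U = sat f U.
Proof.
  induction f; simpl; intros H U; try reflexivity.
  - rewrite (IHf H U); reflexivity.
  - destruct H as [H1 H2]; rewrite (IHf1 H1 U), (IHf2 H2 U); reflexivity.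
  - apply functional_extensionality; intro x.
    assert (E : forall V, sat0 f V = sat f V) by (intro; apply IHf; exact H).
    rewrite (E U); reflexivity.
  - rewrite (IHf H U); reflexivity.
  - destruct H as [H1 H2].
    apply functional_extensionality; intro x.
    rewrite (IHf1 H1 U).
    rewrite (IHf2 H2); reflexivity.
  - contradiction.
Qed.

End APALint.

From Stdlib Require Import List Classical ClassicalEpsilon FunctionalExtensionality
  PropExtensionality Lia Cantor FinFun.
Import ListNotations.

(* The canonical model is built from maximally consistent theories, which exist by a
   Lindenbaum construction that also enumerates the instances of the infinitary rule
   (DR5): whenever a necessity form xi(Box c) is refuted, a Box-free chi with
   ~ xi([chi] c) is added.  The truth lemma is then proved by induction on the
   lexicographic measure (number of Boxes, size): K_i and int are handled by the
   usual existence lemma, an announcement [a] b is pushed inwards by the reduction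
   axioms, and Box c (resp. [a] Box c) is reduced to all [chi] c (resp. [a][chi] c)
   with chi Box-free, which have fewer Boxes. *)

Arguments Var {P Ag}. Arguments FInt {P Ag}. Arguments NInt {P Ag}.
Arguments Hole {P Ag}. Arguments Bot {P Ag}.

Ltac prove_tautology :=
  apply Ax_taut; let v := fresh "v" in intro v; unfold Imp, Iff, Bot; simpl;
  repeat (first [destruct (beval v _) | destruct (v _)]); reflexivity.

Lemma lex_measure_ind {A : Type} (m1 m2 : A -> nat) (Q : A -> Prop) :
  (forall f, (forall g, m1 g < m1 f \/ (m1 g <= m1 f /\ m2 g < m2 f) -> Q g) -> Q f) ->
  forall f, Q f.
Proof.
  intros H.
  assert (Hn : forall N M f, m1 f <= N -> m2 f <= M -> Q f).
  { induction N; induction M; intros f h1 h2; apply H; intros g [hg|[hg1 hg2]]; try lia.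
    - apply (IHM g); lia.
    - apply (IHN (m2 g)); lia.
    - apply (IHN (m2 g)); lia.
    - apply (IHM g); lia. }
  intros f. apply (Hn (m1 f) (m2 f)); lia.
Qed.

Section Countability.

Lemma injection_nat_surjection {A : Type} {c : A -> nat} :
  inhabited A -> Injective c -> exists e : nat -> A, Surjective e.
Proof.
  intros inhA c_inj.
  exists (fun n => epsilon inhA (fun a => c a = n)).
  intros a. exists (c a). apply c_inj.
  exact (epsilon_spec inhA (fun b => c b = c a) (ex_intro _ a eq_refl)).
Qed.

Lemma finite_nat_injection {A : Type} : Finite A -> exists c : A -> nat, Injective c.
Proof.
  intros [l l_full].
  exists (fun a => epsilon (inhabits 0) (fun n => nth_error l n = Some a)).
  intros a b hab.
  assert (Hidx : forall a, nth_error l (epsilon (inhabits 0) (fun n => nth_error l n = Some a))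
                             = Some a).
  { intros a'. apply epsilon_spec, In_nth_error, l_full. }
  pose proof (Hidx a) as ha. rewrite hab, Hidx in ha. congruence.
Qed.

Definition npair (m n : nat) : nat := to_nat (m, n).

Lemma npair_inj m n m' n' : npair m n = npair m' n' -> m = m' /\ n = n'.
Proof.
  unfold npair. intros h. apply (f_equal of_nat) in h.
  rewrite !cancel_of_to in h. injection h. auto.
Qed.

Context {P Ag : Type} {codeP : P -> nat} {codeA : Ag -> nat}.
Hypotheses (codeP_inj : Injective codeP) (codeA_inj : Injective codeA).

Fixpoint form_code (f : form P Ag) : nat :=
  match f with
  | Var p => npair 0 (codeP p)
  | Neg a => npair 1 (form_code a)
  | And a b => npair 2 (npair (form_code a) (form_code b))
  | K i a => npair 3 (npair (codeA i) (form_code a))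
  | FInt a => npair 4 (form_code a)
  | Ann a b => npair 5 (npair (form_code a) (form_code b))
  | Box a => npair 6 (form_code a)
  end.

Fixpoint nform_code (xi : nform P Ag) : nat :=
  match xi with
  | Hole => npair 0 0
  | NImp a xi => npair 1 (npair (form_code a) (nform_code xi))
  | NK i xi => npair 2 (npair (codeA i) (nform_code xi))
  | NInt xi => npair 3 (nform_code xi)
  | NAnn a xi => npair 4 (npair (form_code a) (nform_code xi))
  end.

Ltac split_npair := repeat match goal with
  | H : npair _ _ = npair _ _ |- _ => apply npair_inj in H; destruct H
  end.

Lemma form_code_inj : Injective form_code.
Proof.
  intros f; induction f; intros g; destruct g; cbn [form_code]; intros H; split_npair;
    try discriminate;
    repeat match goal with
    | H : codeP _ = codeP _ |- _ => apply codeP_inj in H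
    | H : codeA _ = codeA _ |- _ => apply codeA_inj in H
    | H : form_code ?a = form_code _, IH : forall g, form_code ?a = form_code g -> _ = g |- _ =>
        apply IH in H
    end; subst; reflexivity.
Qed.

Lemma nform_code_inj : Injective nform_code.
Proof.
  intros xi; induction xi; intros xi'; destruct xi'; cbn [nform_code]; intros H; split_npair;
    try discriminate;
    repeat match goal with
    | H : codeA _ = codeA _ |- _ => apply codeA_inj in H
    | H : form_code _ = form_code _ |- _ => apply form_code_inj in H
    | H : nform_code ?a = nform_code _, IH : forall g, nform_code ?a = nform_code g -> _ = g |- _ =>
        apply IH in H
    end; subst; reflexivity.
Qed.

Definition triple_code (tr : form P Ag * nform P Ag * form P Ag) : nat :=
  let '(a, xi, c) := tr in npair (form_code a) (npair (nform_code xi) (form_code c)).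

Lemma triple_code_inj : Injective triple_code.
Proof.
  intros [[a xi] c] [[a' xi'] c'] H. simpl in H.
  apply npair_inj in H as [ha H]. apply npair_inj in H as [hxi hc].
  apply form_code_inj in ha, hc. apply nform_code_inj in hxi. subst. reflexivity.
Qed.

End Countability.

Lemma triples_enumerable {P Ag : Type} (p0 : P) :
  (exists f : P -> nat, Injective f) -> Finite Ag ->
  exists e : nat -> form P Ag * nform P Ag * form P Ag, Surjective e.
Proof.
  intros [codeP codeP_inj] HAfin.
  destruct (finite_nat_injection HAfin) as [codeA codeA_inj].
  apply (injection_nat_surjection (inhabits (Var p0, Hole, Var p0))
           (triple_code_inj codeP_inj codeA_inj)).
Qed.

Section Theories.

Context {P Ag : Type}.
Implicit Types (x : fset P Ag) (a b c : form P Ag).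

Lemma theory_thm {x a} : isTheory x -> Thm a -> x a.
Proof. intros [H _] h; auto. Qed.

Lemma theory_mp {x a b} : isTheory x -> x (Imp a b) -> x a -> x b.
Proof. intros [_ [H _]] h1 h2; eauto. Qed.

Lemma theory_thm_mp {x a b} : isTheory x -> x a -> Thm (Imp a b) -> x b.
Proof. intros T h1 h2. apply (theory_mp T (theory_thm T h2) h1). Qed.

Lemma theory_thm_mp2 {x a b c} : isTheory x -> x a -> x b -> Thm (Imp a (Imp b c)) -> x c.
Proof. intros T h1 h2 h3. exact (theory_mp T (theory_thm_mp T h1 h3) h2). Qed.

Lemma theory_DR5 {x} xi {c} :
  isTheory x -> (forall psi, isPAL psi -> x (fill xi (Ann psi c))) -> x (fill xi (Box c)).
Proof. intros [_ [_ D]]; auto. Qed.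

Definition extend x a : fset P Ag := fun b => x (Imp a b).

Lemma extend_theory {x} a : isTheory x -> isTheory (extend x a).
Proof.
  intros T. split; [|split]; unfold extend.
  - intros b hb. apply (theory_thm T). eapply R_MP; [|exact hb]. prove_tautology.
  - intros b c h1 h2. apply (theory_thm_mp2 T h1 h2). prove_tautology.
  - intros xi c H. exact (theory_DR5 (NImp a xi) T H).
Qed.

Lemma extend_incl {x} a {b} : isTheory x -> x b -> extend x a b.
Proof. intros T h. apply (theory_thm_mp T h). prove_tautology. Qed.

Lemma extend_self {x} a : isTheory x -> extend x a a.
Proof. intros T. apply (theory_thm T). prove_tautology. Qed.

End Theories.

Section CanonicalModel.

Variables (P Ag : Type) (p0 : P).
Implicit Types (t : fset P Ag) (a b c d chi psi : form P Ag) (xi : nform P Ag).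
Local Notation triple := (form P Ag * nform P Ag * form P Ag)%type.

Definition consistent_with t a : Prop := ~ extend t a (Bot p0).

(** * Lindenbaum's lemma *)

Definition box_witness t xi c : form P Ag :=
  epsilon (inhabits (Var p0))
    (fun chi => isPAL chi /\ consistent_with t (Neg (fill xi (Ann chi c)))).

(* Stage [(psi, xi, c)] adds psi if possible; otherwise, if psi is xi(Box c), it adds a
   counterexample ~ xi([chi] c) so that the limit stays closed under (DR5). *)
Definition step t (tr : triple) : fset P Ag :=
  let '(psi, xi, c) := tr in
  let chi := box_witness t xi c in
  if excluded_middle_informative (consistent_with t psi) then extend t psi
  else if excluded_middle_informative
            (isPAL chi /\ consistent_with t (Neg (fill xi (Ann chi c))))
  then extend t (Neg (fill xi (Ann chi c)))
  else t.

Lemma step_consistent t tr : consistentTheory p0 t -> consistentTheory p0 (step t tr).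
Proof.
  intros [T C]. destruct tr as [[psi xi] c]. unfold step.
  destruct excluded_middle_informative as [h|_]; [split; [apply extend_theory|]; auto|].
  destruct excluded_middle_informative as [[_ h]|_]; [|split; auto].
  split; [apply extend_theory|]; auto.
Qed.

Lemma step_incl t tr a : isTheory t -> t a -> step t tr a.
Proof.
  intros T h. destruct tr as [[psi xi] c]. unfold step.
  repeat destruct excluded_middle_informative; auto using extend_incl.
Qed.

Lemma step_adds t psi xi c : isTheory t -> consistent_with t psi -> step t (psi, xi, c) psi.
Proof.
  intros T h. unfold step.
  destruct excluded_middle_informative; [apply extend_self; auto | contradiction].
Qed.

Lemma step_refutes_box {t xi c} :
  consistentTheory p0 t -> ~ consistent_with t (fill xi (Box c)) ->
  exists chi, isPAL chi /\ step t (fill xi (Box c), xi, c) (Neg (fill xi (Ann chi c))).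
Proof.
  intros [T C] h. unfold step.
  destruct excluded_middle_informative; [contradiction|].
  assert (Ex : exists chi, isPAL chi /\ consistent_with t (Neg (fill xi (Ann chi c)))).
  { apply NNPP. intros N. apply NNPP in h. unfold extend in h.
    apply C, (theory_mp T h), (theory_DR5 _ T). intros chi hchi. apply NNPP. intros N2.
    apply N. exists chi. split; auto. intros hbot. apply N2.
    apply (theory_thm_mp T hbot). prove_tautology. }
  pose proof (epsilon_spec (inhabits (Var p0)) _ Ex) as Hw. fold (box_witness t xi c) in Hw.
  destruct excluded_middle_informative; [|contradiction].
  exists (box_witness t xi c). split; [tauto | apply extend_self; auto].
Qed.

Section Lindenbaum.

Variable enum : nat -> triple.
Hypothesis enum_surj : Surjective enum.
Variable t : fset P Ag.
Hypothesis t_consistent : consistentTheory p0 t.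

Fixpoint chain (n : nat) : fset P Ag :=
  match n with 0 => t | S n => step (chain n) (enum n) end.

Lemma chain_consistent n : consistentTheory p0 (chain n).
Proof. induction n; simpl; auto using step_consistent. Qed.

Lemma chain_mono n m a : n <= m -> chain n a -> chain m a.
Proof.
  induction 1 as [|m _ IH]; auto. intros h.
  apply step_incl; [exact (proj1 (chain_consistent m)) | exact (IH h)].
Qed.

Lemma chain_common {n m a b} : chain n a -> chain m b -> chain (max n m) a /\ chain (max n m) b.
Proof. intros ha hb. split; [apply (chain_mono n) | apply (chain_mono m)]; auto; lia. Qed.

Definition chain_limit : fset P Ag := fun a => exists n, chain n a.

Lemma chain_limit_theory : isTheory chain_limit.
Proof.
  split; [|split].
  - intros a ha. exists 0. apply (theory_thm (proj1 t_consistent) ha).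
  - intros a b [n hn] [m hm]. destruct (chain_common hn hm) as [h1 h2].
    exists (max n m). apply (theory_mp (proj1 (chain_consistent _)) h1 h2).
  - intros xi c H. destruct (enum_surj (fill xi (Box c), xi, c)) as [n hn].
    destruct (classic (consistent_with (chain n) (fill xi (Box c)))) as [hc|hc].
    + exists (S n). simpl. rewrite hn. apply step_adds; auto. apply chain_consistent.
    + exfalso. destruct (step_refutes_box (chain_consistent n) hc) as [chi [hchi hs]].
      rewrite <- hn in hs. destruct (H chi hchi) as [m hm].
      destruct (chain_common (n := S n) hs hm) as [h1 h2].
      destruct (chain_consistent (max (S n) m)) as [T C].
      apply C, (theory_thm_mp2 T h1 h2). prove_tautology.
Qed.

Lemma lindenbaum : maxConsistent p0 chain_limit /\ forall a, t a -> chain_limit a.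
Proof.
  split; [split; [split|] | intros a ha; exists 0; exact ha].
  - exact chain_limit_theory.
  - intros [n hn]. exact (proj2 (chain_consistent n) hn).
  - intros U HU [a [hUa hna]] [z [[Tz Cz] hz]].
    destruct (enum_surj (a, Hole, a)) as [n hn].
    destruct (classic (consistent_with (chain n) a)) as [hc|hc].
    + apply hna. exists (S n). simpl. rewrite hn. apply step_adds; auto.
      apply chain_consistent.
    + apply Cz, (theory_thm_mp2 Tz (a := Imp a (Bot p0)) (b := a)); [|auto|prove_tautology].
      apply hz, HU. exists n. exact (NNPP _ hc).
Qed.

End Lindenbaum.

Local Notation world := (Xc Ag p0).
Implicit Types x y z : world.

Lemma mem_theory x : isTheory (proj1_sig x).
Proof. exact (proj1 (proj1 (proj2_sig x))). Qed.

Lemma mem_thm x a : Thm a -> mem x a.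
Proof. apply theory_thm, mem_theory. Qed.

Lemma mem_thm_mp {x a b} : mem x a -> Thm (Imp a b) -> mem x b.
Proof. apply theory_thm_mp, mem_theory. Qed.

Lemma mem_DR5 {x} xi {c} :
  (forall psi, isPAL psi -> mem x (fill xi (Ann psi c))) -> mem x (fill xi (Box c)).
Proof. apply theory_DR5, mem_theory. Qed.

Lemma mem_Neg x a : mem x (Neg a) <-> ~ mem x a.
Proof.
  destruct x as [x [[T C] Max]]; unfold mem; simpl. split.
  - intros h1 h2. apply C, (theory_thm_mp2 T h1 h2). prove_tautology.
  - intros h. destruct (classic (extend x a (Bot p0))) as [hb|hb].
    + apply (theory_thm_mp T hb). prove_tautology.
    + exfalso. apply (Max (extend x a)).
      * intros b. apply extend_incl; auto.
      * exists a. split; auto. apply extend_self; auto.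
      * exists (extend x a). split; [split; [apply extend_theory|]|]; auto.
Qed.

Lemma mem_And x a b : mem x (And a b) <-> mem x a /\ mem x b.
Proof.
  split.
  - intros h; split; apply (mem_thm_mp h); prove_tautology.
  - intros [h1 h2]. apply (theory_thm_mp2 (mem_theory x) h1 h2). prove_tautology.
Qed.

Lemma mem_Imp x a b : mem x (Imp a b) <-> (mem x a -> mem x b).
Proof.
  split.
  - apply theory_mp, mem_theory.
  - intros h. destruct (classic (mem x a)) as [ha|ha].
    + apply (mem_thm_mp (h ha)). prove_tautology.
    + apply mem_Neg in ha. apply (mem_thm_mp ha). prove_tautology.
Qed.

Lemma mem_thm_iff x {a b} : Thm (Iff a b) -> (mem x a <-> mem x b).
Proof.
  intros h. apply (mem_thm x), mem_And in h. rewrite !mem_Imp in h. tauto.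
Qed.

Lemma mem_Ann_Var x a p : mem x (Ann a (Var p)) <-> (mem x (FInt a) -> mem x (Var p)).
Proof. rewrite (mem_thm_iff x (Ax_Rp a p)). apply mem_Imp. Qed.

Lemma mem_Ann_Neg x a b : mem x (Ann a (Neg b)) <-> (mem x (FInt a) -> ~ mem x (Ann a b)).
Proof. rewrite (mem_thm_iff x (Ax_Rneg a b)), mem_Imp, mem_Neg. reflexivity. Qed.

Lemma mem_Ann_And x a b c : mem x (Ann a (And b c)) <-> mem x (Ann a b) /\ mem x (Ann a c).
Proof. rewrite (mem_thm_iff x (Ax_Rand a b c)). apply mem_And. Qed.

Lemma mem_Ann_K x a i b : mem x (Ann a (K i b)) <-> (mem x (FInt a) -> mem x (K i (Ann a b))).
Proof. rewrite (mem_thm_iff x (Ax_RK a i b)). apply mem_Imp. Qed.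

Lemma mem_Ann_FInt x a b :
  mem x (Ann a (FInt b)) <-> (mem x (FInt a) -> mem x (FInt (Ann a b))).
Proof. rewrite (mem_thm_iff x (Ax_Rint a b)). apply mem_Imp. Qed.

Lemma mem_Ann_Ann x a b c :
  mem x (Ann a (Ann b c)) <-> mem x (Ann (Neg (Ann a (Neg (FInt b)))) c).
Proof. exact (mem_thm_iff x (Ax_Rann a b c)). Qed.

Lemma not_FInt_Ann_composition x a b :
  ~ mem x (FInt a) -> ~ mem x (FInt (Neg (Ann a (Neg (FInt b))))).
Proof.
  intros h hi. apply (fun hi => mem_thm_mp hi (Ax_IntT _)), mem_Neg in hi.
  apply hi, mem_Ann_Neg. tauto.
Qed.

Lemma mem_Ann_of_not_FInt x b : forall a, ~ mem x (FInt a) -> mem x (Ann a b).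
Proof.
  induction b as [p|b IH|b1 IH1 b2 IH2|i b IH|b IH|b1 IH1 b2 IH2|b IH]; intros a h.
  - apply mem_Ann_Var. tauto.
  - apply mem_Ann_Neg. tauto.
  - apply mem_Ann_And. auto.
  - apply mem_Ann_K. tauto.
  - apply mem_Ann_FInt. tauto.
  - apply mem_Ann_Ann, IH2, not_FInt_Ann_composition, h.
  - apply (mem_DR5 (NAnn a Hole)). intros psi _.
    apply mem_Ann_Ann, IH, not_FInt_Ann_composition, h.
Qed.

Lemma mem_Ann_mp {x a b c} : mem x (Ann a (Imp b c)) -> mem x (Ann a b) -> mem x (Ann a c).
Proof.
  intros h1 h2. destruct (classic (mem x (FInt a))) as [hi|hi].
  - unfold Imp in h1. rewrite mem_Ann_Neg, mem_Ann_And, mem_Ann_Neg in h1.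
    apply NNPP. intros N. apply h1; auto.
  - apply mem_Ann_of_not_FInt, hi.
Qed.

Lemma mem_Ann_Box x a c :
  mem x (Ann a (Box c)) <-> forall chi, isPAL chi -> mem x (Ann a (Ann chi c)).
Proof.
  split.
  - intros h chi hchi. apply (mem_Ann_mp (b := Box c)); auto.
    apply mem_thm, R_NecAnn, Ax_Box, hchi.
  - apply (mem_DR5 (NAnn a Hole)).
Qed.

Lemma mem_Box x c : mem x (Box c) <-> forall chi, isPAL chi -> mem x (Ann chi c).
Proof.
  split.
  - intros h chi hchi. apply (mem_thm_mp h), Ax_Box, hchi.
  - apply (mem_DR5 Hole).
Qed.

Lemma lindenbaum_world {t : fset P Ag} :
  (exists e : nat -> triple, Surjective e) -> consistentTheory p0 t ->
  exists y : world, forall a, t a -> mem y a.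
Proof.
  intros [e He] Ct. destruct (lindenbaum e He t Ct) as [M Ht].
  exists (exist _ _ M). exact Ht.
Qed.

Section Existence.

Hypothesis triples_enum : exists e : nat -> triple, Surjective e.

Variable O : form P Ag -> form P Ag.
Hypothesis O_nec : forall a, Thm a -> Thm (O a).
Hypothesis O_K : forall a b, Thm (Imp (O (Imp a b)) (Imp (O a) (O b))).
Hypothesis O_nform : forall xi, exists xi', forall c, fill xi' c = O (fill xi c).

Lemma preimage_theory (t : fset P Ag) : isTheory t -> isTheory (fun a => t (O a)).
Proof.
  intros T. split; [|split].
  - intros a h. apply (theory_thm T), O_nec, h.
  - intros a b h1 h2. exact (theory_thm_mp2 T h1 h2 (O_K a b)).
  - intros xi c H. destruct (O_nform xi) as [xi' E]. rewrite <- E.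
    apply (theory_DR5 _ T). intros psi hpsi. rewrite E. auto.
Qed.

Lemma mem_existence {x a} :
  ~ mem x (O a) -> exists y, (forall b, mem x (O b) -> mem y b) /\ ~ mem y a.
Proof.
  intros h. set (t := fun b => mem x (O b)).
  assert (Tt : isTheory t) by apply preimage_theory, mem_theory.
  assert (Ct : consistent_with t (Neg a)).
  { intros hb. apply h. apply (theory_thm_mp (mem_theory x) hb).
    eapply R_MP; [apply O_K|]. apply O_nec. prove_tautology. }
  destruct (lindenbaum_world triples_enum (conj (extend_theory (Neg a) Tt) Ct)) as [y Hy].
  exists y. split.
  - intros b hb. apply Hy, extend_incl; auto.
  - intros ha. apply mem_Neg in ha; auto. apply Hy, extend_self; auto.
Qed.

End Existence.

Lemma K_nform i xi : exists xi', forall c, fill xi' c = K i (fill xi c).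
Proof. exists (NK i xi). reflexivity. Qed.

Lemma FInt_nform xi : exists xi', forall c, fill xi' c = FInt (fill xi c).
Proof. exists (NInt xi). reflexivity. Qed.

Lemma mem_K_negative_introspection x i b : ~ mem x (K i b) -> mem x (K i (Neg (K i b))).
Proof. intros h. apply mem_Neg in h. apply (mem_thm_mp h), Ax_K5. Qed.

(* The converse inclusion holds because negative introspection carries ~K_i b over. *)
Lemma simc_of_successor {O x y i} :
  (forall b, mem x (K i b) -> mem x (O (K i b))) ->
  (forall b, mem x (K i (Neg (K i b))) -> mem x (O (Neg (K i b)))) ->
  (forall b, mem x (O b) -> mem y b) -> simc i x y.
Proof.
  intros HK HN Hy b. split.
  - intros hb. apply Hy, HK, hb.
  - intros hb. apply NNPP. intros nb. apply mem_K_negative_introspection, HN, Hy in nb.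
    apply mem_Neg in nb. auto.
Qed.

(** * The canonical topology *)

Lemma interior_sub (A : world -> Prop) y : interior A y -> A y.
Proof. intros [U [_ [h1 h2]]]. auto. Qed.

Lemma interior_mono (A B : world -> Prop) y :
  (forall z, A z -> B z) -> interior A y -> interior B y.
Proof. intros H [U [h0 [h1 h2]]]. exists U. auto. Qed.

Lemma interior_iff (A B : world -> Prop) y :
  (forall z, A z <-> B z) -> (interior A y <-> interior B y).
Proof. intros H; split; apply interior_mono; intros z; apply H. Qed.

Lemma interior_open (A : world -> Prop) : isOpen (interior A).
Proof.
  intros y [U [hU [hy hA]]]. destruct (hU y hy) as [l [l1 l2]].
  exists l. split; auto. intros z hz. exists U. auto.
Qed.

Lemma open_interior (A : world -> Prop) y : isOpen A -> A y -> interior A y.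
Proof. intros h1 h2. exists A. auto. Qed.

Lemma open_inter (A B : world -> Prop) : isOpen A -> isOpen B -> isOpen (fun y => A y /\ B y).
Proof.
  intros hA hB y [ya yb]. destruct (hA y ya) as [l [l1 l2]], (hB y yb) as [m [m1 m2]].
  exists (l ++ m). split.
  - intros s hs. apply in_app_or in hs. destruct hs; auto.
  - intros z hz. split; [apply l2|apply m2]; intros s hs; apply hz, in_or_app; auto.
Qed.

Lemma subbase_open (s : world * form P Ag * Ag) : isOpen (subbase s).
Proof.
  intros y hy. exists [s]. split.
  - intros s' [<-|[]]. exact hy.
  - intros z hz. apply hz. left; reflexivity.
Qed.

Lemma pred_ext {X : Type} (A B : X -> Prop) : (forall u, A u <-> B u) -> A = B.
Proof.
  intros h. apply functional_extensionality. intros u. apply propositional_extensionality, h.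
Qed.

Lemma interior_idem (A : world -> Prop) : interior (interior A) = interior A.
Proof.
  apply pred_ext. intros y. split; [apply interior_sub|].
  intros h. apply open_interior; auto. apply interior_open.
Qed.

Lemma interior_relativize (I S : world -> Prop) x :
  isOpen I -> I x ->
  (interior (fun y => I y -> S y) x <-> interior (fun y => (True /\ I y) /\ S y) x).
Proof.
  intros hI hx. split.
  - intros [V [hV [hVx hVS]]]. exists (fun y => V y /\ I y).
    split; [apply open_inter; auto|]. split; auto. intros z [h1 h2]. auto.
  - apply interior_mono. tauto.
Qed.

(* A successor y of x for int lies in every subbasic open set containing x: the
   [x]_i-part is preserved since K_i b -> int(K_i b), the int-part by axiom 4 for int. *)
Lemma FInt_successor_in_subbase {x y} :
  (forall b, mem x (FInt b) -> mem y b) -> forall s, subbase s x -> subbase s y.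
Proof.
  intros Hy [[z b] i] [hz hb]. split.
  - intros c. rewrite (hz c). apply (simc_of_successor (O := FInt)); auto.
    + intros b' h. apply (mem_thm_mp (mem_thm_mp h (Ax_K4 _ _))), Ax_KInt.
    + intros b' h. apply (mem_thm_mp h), Ax_KInt.
  - apply Hy, (mem_thm_mp hb), Ax_Int4.
Qed.

Section TruthLemma.

Hypothesis triples_enum : exists e : nat -> triple, Surjective e.
Hypothesis agents_inhabited : inhabited Ag.

Lemma mem_K x i a : mem x (K i a) <-> forall y, simc i x y -> mem y a.
Proof.
  split.
  - intros h y hs. apply hs in h. apply (mem_thm_mp h), Ax_KT.
  - intros H. apply NNPP. intros N.
    destruct (mem_existence triples_enum (K i) (R_NecK i) (Ax_KK i) (K_nform i) N)
      as [y [Hy Hna]].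
    apply Hna, H, (simc_of_successor (O := K i)); auto.
    intros b hb. apply (mem_thm_mp hb), Ax_K4.
Qed.

Lemma mem_FInt x a : mem x (FInt a) <-> interior (fun y => mem y a) x.
Proof.
  split.
  - intros h. destruct agents_inhabited as [i0].
    exists (subbase (x, a, i0)). split; [apply subbase_open|split].
    + split; [intros b; reflexivity | exact h].
    + intros z [_ hz]. apply (mem_thm_mp hz), Ax_IntT.
  - intros [V [hV [hx hVa]]]. destruct (hV x hx) as [l [l1 l2]].
    apply NNPP. intros N.
    destruct (mem_existence triples_enum FInt (@R_NecInt P Ag) (@Ax_IntK P Ag) FInt_nform N)
      as [y [Hy Hna]].
    apply Hna, hVa, l2. intros s hs. apply (FInt_successor_in_subbase Hy), l1, hs.
Qed.

(** * The truth lemma *)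

Lemma sat_Ann_Ann a c d x :
  sat (Ann (Neg (Ann a (Neg (FInt c)))) d) (fun _ => True) x <->
  sat (Ann a (Ann c d)) (fun _ => True) x.
Proof.
  cbn [sat].
  set (I := interior (fun y => True /\ sat a (fun _ => True) y)).
  set (W := fun y => True /\ I y).
  set (J := interior (fun y => W y /\ sat c W y)).
  change (interior (fun y => (True /\ I y) /\ sat c W y)) with J.
  assert (HJI : forall y, J y -> I y).
  { intros y hy. apply interior_sub in hy. destruct hy as [[_ h] _]. exact h. }
  assert (E1 : (fun z => True /\ ~ (I z -> ~ J z)) = J).
  { apply pred_ext. intros y. split; [intros [_ h]; apply NNPP; intros n; apply h; auto|].
    intros h; split; auto. }
  rewrite E1. unfold J at 1 2. rewrite interior_idem. fold J.
  assert (E2 : (fun y => True /\ J y) = J) by (apply pred_ext; tauto).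
  assert (E3 : (fun y => (True /\ I y) /\ J y) = J).
  { apply pred_ext. intros y. split; [tauto|]. intros h. split; auto. }
  rewrite E2, E3. split; auto.
Qed.

Definition truthful (f : form P Ag) : Prop :=
  forall x : world, mem x f <-> sat f (fun _ => True) x.

Lemma truthful_Var p : truthful (Var p).
Proof. unfold truthful; intros x. reflexivity. Qed.

Lemma truthful_Neg a : truthful a -> truthful (Neg a).
Proof. unfold truthful; intros IH x. cbn [sat]. rewrite <- IH. apply mem_Neg. Qed.

Lemma truthful_And a b : truthful a -> truthful b -> truthful (And a b).
Proof. unfold truthful; intros IHa IHb x. cbn [sat]. rewrite <- IHa, <- IHb. apply mem_And. Qed.

Lemma truthful_K i a : truthful a -> truthful (K i a).
Proof.
  unfold truthful; intros IH x. cbn [sat]. rewrite mem_K. unfold cls.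
  split; intros h y; [intros [hs _] | intros hs]; apply IH; auto.
Qed.

Lemma truthful_FInt a : truthful a -> truthful (FInt a).
Proof.
  unfold truthful; intros IH x. cbn [sat]. rewrite mem_FInt.
  apply interior_iff. intros y. rewrite IH. tauto.
Qed.

Lemma truthful_Ann_Var a p : truthful (FInt a) -> truthful (Ann a (Var p)).
Proof. unfold truthful; intros IHa x. rewrite mem_Ann_Var, IHa. reflexivity. Qed.

Lemma truthful_Ann_Neg a c : truthful (FInt a) -> truthful (Ann a c) -> truthful (Ann a (Neg c)).
Proof. unfold truthful; intros IHa IHc x. rewrite mem_Ann_Neg, IHa, IHc. cbn [sat]. tauto. Qed.

Lemma truthful_Ann_And a c d :
  truthful (Ann a c) -> truthful (Ann a d) -> truthful (Ann a (And c d)).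
Proof. unfold truthful; intros IHc IHd x. rewrite mem_Ann_And, IHc, IHd. cbn [sat]. tauto. Qed.

Lemma truthful_Ann_K a i c : truthful (FInt a) -> truthful (Ann a c) -> truthful (Ann a (K i c)).
Proof.
  unfold truthful; intros IHa IHc x. rewrite mem_Ann_K, IHa, mem_K. cbn [sat]. unfold cls.
  split; intros h hI y.
  - intros [hs [_ hy]]. apply IHc; auto.
  - intros hs. apply IHc. intros hy. apply h; auto.
Qed.

Lemma truthful_Ann_FInt a c :
  truthful (FInt a) -> truthful (Ann a c) -> truthful (Ann a (FInt c)).
Proof.
  unfold truthful; intros IHa IHc x. rewrite mem_Ann_FInt, IHa, mem_FInt. cbn [sat].
  split; intros h hI; specialize (h hI).
  - apply (proj1 (interior_relativize _ _ _ (interior_open _) hI)).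
    revert h. apply interior_mono. intros y. apply IHc.
  - apply (proj2 (interior_relativize _ _ _ (interior_open _) hI)) in h.
    revert h. apply interior_mono. intros y. apply IHc.
Qed.

Lemma truthful_Ann_Ann a c d :
  truthful (Ann (Neg (Ann a (Neg (FInt c)))) d) -> truthful (Ann a (Ann c d)).
Proof. unfold truthful; intros IH x. rewrite mem_Ann_Ann, IH. apply sat_Ann_Ann. Qed.

Lemma truthful_Ann_Box a c :
  (forall chi, isPAL chi -> truthful (Ann a (Ann chi c))) -> truthful (Ann a (Box c)).
Proof.
  unfold truthful; intros IH x. rewrite mem_Ann_Box.
  assert (E : forall chi, isPAL chi ->
            mem x (Ann a (Ann chi c)) <-> sat (Ann a (Ann chi c)) (fun _ => True) x)
    by (intros chi hchi; apply IH, hchi).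
  cbn [sat] in E |- *. split.
  - intros h hI psi hpsi. rewrite (sat0_sat_PAL psi hpsi). apply E; auto.
  - intros h psi hpsi. apply E; auto. intros hI. specialize (h hI psi hpsi).
    rewrite (sat0_sat_PAL psi hpsi) in h. exact h.
Qed.

Lemma truthful_Box c : (forall chi, isPAL chi -> truthful (Ann chi c)) -> truthful (Box c).
Proof.
  unfold truthful; intros IH x. rewrite mem_Box.
  assert (E : forall chi, isPAL chi -> mem x (Ann chi c) <-> sat (Ann chi c) (fun _ => True) x)
    by (intros chi hchi; apply IH, hchi).
  cbn [sat] in E |- *. split.
  - intros h psi hpsi. rewrite (sat0_sat_PAL psi hpsi). apply E; auto.
  - intros h psi hpsi. apply E; auto. specialize (h psi hpsi).
    rewrite (sat0_sat_PAL psi hpsi) in h. exact h.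
Qed.

Fixpoint box_count (f : form P Ag) : nat :=
  match f with
  | Var _ => 0
  | Neg a | K _ a | FInt a => box_count a
  | And a b | Ann a b => box_count a + box_count b
  | Box a => S (box_count a)
  end.

(* Announcements weigh multiplicatively so that every reduction axiom, read from
   left to right, decreases the size. *)
Fixpoint ann_size (f : form P Ag) : nat :=
  match f with
  | Var _ => 1
  | Neg a | K _ a | FInt a | Box a => S (ann_size a)
  | And a b => S (ann_size a + ann_size b)
  | Ann a b => (4 + ann_size a) * ann_size b
  end.

Lemma ann_size_pos f : 1 <= ann_size f.
Proof. induction f; simpl; nia. Qed.

Lemma box_count_PAL {f} : isPAL f -> box_count f = 0.
Proof. induction f; simpl; intuition; lia. Qed.

Ltac lex_decreasing :=
  simpl;
  repeat match goal with
  | |- context [ann_size ?t] =>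
      lazymatch goal with
      | _ : 1 <= ann_size t |- _ => fail
      | _ => pose proof (ann_size_pos t)
      end
  end;
  first [left; lia | right; split; [lia | nia]].

Theorem truth_lemma f : truthful f.
Proof.
  revert f. apply (lex_measure_ind box_count ann_size). intros f IH.
  destruct f as [p|a|a b|i a|a|a b|c].
  - apply truthful_Var.
  - apply truthful_Neg, IH; lex_decreasing.
  - apply truthful_And; apply IH; lex_decreasing.
  - apply truthful_K, IH; lex_decreasing.
  - apply truthful_FInt, IH; lex_decreasing.
  - destruct b as [p|c|c d|i c|c|c d|c].
    + apply truthful_Ann_Var, IH; lex_decreasing.
    + apply truthful_Ann_Neg; apply IH; lex_decreasing.
    + apply truthful_Ann_And; apply IH; lex_decreasing.
    + apply truthful_Ann_K; apply IH; lex_decreasing.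
    + apply truthful_Ann_FInt; apply IH; lex_decreasing.
    + apply truthful_Ann_Ann, IH; lex_decreasing.
    + apply truthful_Ann_Box. intros chi hchi. apply IH.
      left. simpl. rewrite (box_count_PAL hchi). lia.
  - apply truthful_Box. intros chi hchi. apply IH.
    left. simpl. rewrite (box_count_PAL hchi). lia.
Qed.

End TruthLemma.

End CanonicalModel.

Theorem mainTheorem16 (P Ag : Type)
  (HPcount : exists f : P -> nat, forall p q, f p = f q -> p = q)
  (HAfin : exists l : list Ag, forall i, In i l)
  (HAne : inhabited Ag)
  (p0 : P) :
  forall (phi : form P Ag) (x : @Xc P Ag p0),
    mem x phi <-> sat phi (fun _ : @Xc P Ag p0 => True) x.
Proof.
  intros phi x. apply truth_lemma; [exact (triples_enumerable p0 HPcount HAfin) | exact HAne].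
Qed.
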